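(* Let $n$ be a positive integer. (a) If $\lambda^{n/2}>\frac{2\sqrt2\, dC_1}{|\theta|}$, then $\langle k_n\theta\rangle=-\frac{dZ_n}{\theta}$. (b) If $\lambda^{n/2}>2dC_1$, then $\langle k_n\theta^2\rangle=-dY_n$.
   Context: Standing setup: $p,q\in\mathbb{Z}$ are such that $x^3-px-q$ is irreducible over $\mathbb{Q}$ with exactly one real root $\theta$ (one has $3\theta^2-4p>0$ and $3\theta^2-p>0$). $K=\mathbb{Q}(\theta)\subset\mathbb{R}$, $\mathcal{O}_K$ its ring of integers. $d$ is a positive integer with $\mathcal{O}_K\subseteq\frac1d\mathbb{Z}[\theta]$. $\lambda\in\mathcal{O}_K$ is a unit with $\lambda>1$. For $n\ge1$ the rationals $a_n,b_n,c_n$ are defined by $a_n+b_n\theta+c_n\theta^2=\lambda^n$, and $X_n=a_n+pc_n-b_n\theta$, $Y_n=a_n+pc_n-c_n\theta^2$, $Z_n=b_n\theta-c_n\theta^2$, $k_n=dc_n$. Constants: $C_1=\max\{\sqrt2,\ \frac{\sqrt2|\theta|}{\sqrt{3\theta^2-4p}}\}$, $C_2=\frac{\sqrt d}{\sqrt{3\theta^2-p}}$. For $x\in\mathbb{R}$, $\langle x\rangle=x-\lfloor x+\tfrac12\rfloor$ and $\|x\|=|\langle x\rangle|$. *)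

From HB Require Import structures.
From mathcomp Require Import all_boot all_order all_algebra.
From Stdlib Require Import ZArith.

Set Implicit Arguments.
Unset Strict Implicit.
Unset Printing Implicit Defensive.

Definition Z_to_int (z : Z) : int :=
  match z with
  | Z0 => Posz 0
  | Zpos n => Posz (Pos.to_nat n)
  | Zneg n => Negz (Pos.to_nat n).-1
  end.

(* Negz k denotes -(k+1). *)

Definition cubic_irreducible (p q : Z) : Prop :=
  irreducible_poly
    (('X^3 - (Z_to_int p)%:~R *: 'X - ((Z_to_int q)%:~R)%:P)%R : {poly rat}).

From Stdlib Require Import Reals QArith Qreals.
Local Open Scope R_scope.

Definition is_alg_integer (alpha : R) : Prop :=
  exists (m : nat) (c : nat -> Z),
    alpha ^ (S m) + sum_f_R0 (fun i => IZR (c i) * alpha ^ i) m = 0.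

(* alpha lies in K = Q(theta) (theta of degree 3, so Q(theta) = Q + Q theta + Q theta^2). *)
Definition in_K (theta alpha : R) : Prop :=
  exists a b c : Q, alpha = Q2R a + Q2R b * theta + Q2R c * theta ^ 2.

Definition in_OK (theta alpha : R) : Prop :=
  in_K theta alpha /\ is_alg_integer alpha.

Definition in_Ztheta_over_d (d : Z) (theta alpha : R) : Prop :=
  exists u v w : Z, IZR d * alpha = IZR u + IZR v * theta + IZR w * theta ^ 2.

(* floor via Stdlib's Int_part (Int_part x = up x - 1 = floor x). *)
Definition Rfloor (x : R) : R := IZR (Int_part x).

(* <x> = x - floor(x + 1/2) *)
Definition centered (x : R) : R := x - Rfloor (x + / 2).

Definition C1const (p : Z) (theta : R) : R :=
  Rmax (sqrt 2) (sqrt 2 * Rabs theta / sqrt (3 * theta ^ 2 - 4 * IZR p)).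

(* Let s := sqrt (3 theta^2 - 4 p) and let sigma be the complex embedding of K
   sending theta to (- theta + i s) / 2.  For a unit lambda > 0 the norm
   N(lambda) = lambda |sigma(lambda)|^2 equals 1, so |sigma(lambda^n)|^2 = lambda^-n.
   Writing lambda^n = a + b theta + c theta^2, one has
   - d Z_n / theta = - 2 d Im sigma(lambda^n) / s and
   - d Y_n = - d (Re sigma(lambda^n) + (theta / s) Im sigma(lambda^n)),
   both of absolute value < 1/2 under the hypotheses on lambda^(n/2), while they
   differ from k_n theta and k_n theta^2 by the integers d b and d (a + p c), since
   d lambda^n lies in Z[theta].  The norm is shown to be 1 without norm theory:
   d^3 N(lambda^(+-1))^m is an integer for every m, which forces N(lambda^(+-1)) <= 1. *)

From HB Require Import structures.
From mathcomp Require Import all_boot all_order all_algebra.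
From mathcomp Require Import Rstruct ssrZ.
From Stdlib Require Import Reals QArith Qreals Lra Psatz ZArith Lia.

Set Implicit Arguments.
Unset Strict Implicit.
Unset Printing Implicit Defensive.
Import GRing.Theory Num.Theory.
(* QArith's [==] on Q would otherwise shadow eqtype's. *)
Local Close Scope Q_scope.

Section PowersOfIntegralElement.
Local Open Scope ring_scope.

Variables (R : comNzRingType) (x : R) (m : nat) (c : nat -> int).
Hypothesis x_root : x ^+ m.+1 + \sum_(i < m.+1) (c i)%:~R * x ^+ i = 0.

Fixpoint pow_coef (k j : nat) : int :=
  match k with
  | O => (j == 0%nat)%:R
  | k'.+1 => (if j is j'.+1 then pow_coef k' j' else 0) - pow_coef k' m * c j
  end.

Lemma pow_coefP k : x ^+ k = \sum_(j < m.+1) (pow_coef k j)%:~R * x ^+ j.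
Proof.
elim: k => [|k IH].
  by rewrite big_ord_recl /= expr0 mulr1 big1 ?addr0 // => j _; rewrite mul0r.
have xm : x ^+ m.+1 = - \sum_(i < m.+1) (c i)%:~R * x ^+ i.
  by apply/eqP; rewrite -subr_eq0 opprK x_root.
rewrite exprS IH mulr_sumr big_ord_recr /= mulrC -mulrA -exprSr xm.
rewrite [RHS]big_ord_recl /=.
under [in RHS]eq_bigr => j _ do rewrite /= intrD intrN mulrDl mulNr intrM.
rewrite big_split /= intrD intrN intrM sub0r mulNr.
under eq_bigr => j _ do rewrite mulrCA -exprS.
rewrite mulrN mulr_sumr -sumrN [RHS]addrCA; congr (_ + _).
rewrite big_ord_recl /= mulrA; congr (_ + _).
by apply: eq_bigr => j _; rewrite mulrA.
Qed.

(* x ^+ K is an eigenvalue, with eigenvector (x ^+ i)_i, of the integer matrix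
   of multiplication by x ^+ K on the span of 1, x, ..., x ^+ m. *)
Lemma monic_root_pow K : exists P : {poly int},
  [/\ P \is monic, size P = m.+2 & root (map_poly intr P) (x ^+ K)].
Proof.
pose M : 'M[int]_m.+1 := \matrix_(i, j) pow_coef (K + i) j.
pose v : 'cV[R]_m.+1 := \col_i x ^+ i.
have Mv : map_mx intr M *m v = x ^+ K *: v.
  apply/matrixP => i j; rewrite !mxE.
  under eq_bigr => k _ do rewrite !mxE.
  by rewrite -pow_coefP exprD.
have hornerMv (P : {poly R}) : horner_mx (map_mx intr M) P *m v = P.[x ^+ K] *: v.
  elim/poly_ind: P => [|P a IH]; first by rewrite rmorph0 mul0mx horner0 scale0r.
  rewrite rmorphD rmorphM /= horner_mx_X horner_mx_C -mulmxE mulmxDl -mulmxA Mv.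
  by rewrite -scalemxAr IH scalerA hornerMXaddC scalerDl mul_scalar_mx mulrC.
exists (char_poly M); split; [exact: char_poly_monic | exact: size_char_poly |].
have := hornerMv (char_poly (map_mx intr M)).
rewrite Cayley_Hamilton mul0mx -map_char_poly => /matrixP /(_ ord0 ord0).
by rewrite !mxE expr0 mulr1 /root => <-.
Qed.

End PowersOfIntegralElement.

Section RealCasts.
Local Open Scope ring_scope.

Lemma IZR_intr (z : Z) : IZR z = (int_of_Z z)%:~R.
Proof.
case: z => [|p|p] //=; first by rewrite IZRposE INRE Pos_to_natE.
rewrite -Pos2Z.opp_pos opp_IZR IZRposE INRE Pos_to_natE NegzE prednK ?mulrNz //.
by rewrite -Pos_to_natE; apply/ssrnat.ltP/Pos2Nat.is_pos.
Qed.

Lemma is_alg_integer_pow (x : R) (K : nat) : is_alg_integer x -> is_alg_integer (pow x K).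
Proof.
move=> [m [c xc]].
have x_root : x ^+ m.+1 + \sum_(i < m.+1) (int_of_Z (c i))%:~R * x ^+ i = 0.
  rewrite -[RHS]xc sum_f_R0E big_mkord RpowE; congr (_ + _); apply: eq_bigr => i _.
  by rewrite IZR_intr RpowE.
have [P [Pmonic Psize PxK]] := @monic_root_pow _ x m (fun i => int_of_Z (c i)) x_root K.
exists m, (fun i => Z_of_int P`_i).
have Psize' : size (map_poly intr P : {poly R}) = m.+2.
  by rewrite size_map_poly_id0 ?Psize // (monicP Pmonic) rmorph1 oner_neq0.
have lead1 : (map_poly intr P : {poly R})`_m.+1 = 1.
  rewrite -[m.+1]/(m.+2.-1) -Psize' -lead_coefE; apply/monicP; exact: monic_map.
apply: etrans (eqP PxK); rewrite horner_coef Psize' big_ord_recr /= sum_f_R0E big_mkord.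
rewrite !RpowE RplusE RmultE addrC lead1 mul1r -exprS; congr (_ + _).
apply: eq_bigr => i _.
by rewrite coef_map IZR_intr Z_of_intK RpowE.
Qed.

Lemma Q2R_ratr (t : Q) :
  Q2R t = ratr ((int_of_Z (Qnum t))%:~R / (int_of_Z (Z.pos (Qden t)))%:~R : rat).
Proof. by rewrite fmorph_div !rmorph_int -!IZR_intr. Qed.

End RealCasts.

Section IrreducibleNoRoot.
Local Open Scope ring_scope.

Lemma irredp_root_size (F : fieldType) (P : {poly F}) (x : F) :
  irreducible_poly P -> root P x -> size P = 2%nat.
Proof.
move=> [_ irrP]; rewrite -dvdp_XsubCl => /irrP.
by rewrite size_XsubC => /(_ isT) /eqp_size; rewrite size_XsubC.
Qed.

Lemma size_depressed_cubic (F : nzRingType) (a b : F) :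
  size ('X^3 - a *: 'X - b%:P : {poly F}) = 4%nat.
Proof.
rewrite -addrA size_polyDl ?size_polyXn // (leq_ltn_trans (size_polyD _ _)) //.
rewrite gtn_max size_polyN size_polyN (leq_ltn_trans (size_scale_leq _ _)) ?size_polyX //.
by rewrite (leq_ltn_trans (size_polyC_leq1 _)).
Qed.

End IrreducibleNoRoot.

Local Open Scope R_scope.

Lemma cubic_no_ratr_root (p q : Z) (r : rat) : cubic_irreducible p q ->
  ratr r ^ 3 - IZR p * ratr r - IZR q <> 0.
Proof.
move=> irr cub; have := @irredp_root_size _ _ r irr.
rewrite size_depressed_cubic => size_eq2; suff: (4 = 2)%nat by []; apply: size_eq2.
rewrite -(fmorph_root (ratr : rat -> R)); apply/eqP.
rewrite horner_map !(hornerD, hornerN, hornerXn, hornerZ, hornerX, hornerC).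
rewrite !(rmorphB, rmorphM, rmorphXn, rmorph_int).
rewrite -[Z_to_int p]/(int_of_Z p) -[Z_to_int q]/(int_of_Z q) -!IZR_intr.
by move: cub; rewrite /= Rmult_1_r.
Qed.

Definition is_rat (x : R) : Prop := exists t : Q, x = Q2R t.
Definition is_int (x : R) : Prop := exists k : Z, x = IZR k.

Lemma is_int_IZR k : is_int (IZR k). Proof. by exists k. Qed.

Lemma is_rat_Q2R t : is_rat (Q2R t). Proof. by exists t. Qed.

Lemma is_rat_int x : is_int x -> is_rat x.
Proof. by move=> [k ->]; exists (inject_Z k); rewrite /Q2R /=; field. Qed.

Lemma is_rat_IZR k : is_rat (IZR k).
Proof. exact: is_rat_int (is_int_IZR k). Qed.

Lemma is_ratD x y : is_rat x -> is_rat y -> is_rat (x + y).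
Proof. by move=> [a ->] [b ->]; exists (Qplus a b); rewrite Q2R_plus. Qed.

Lemma is_ratM x y : is_rat x -> is_rat y -> is_rat (x * y).
Proof. by move=> [a ->] [b ->]; exists (Qmult a b); rewrite Q2R_mult. Qed.

Lemma is_ratN x : is_rat x -> is_rat (- x).
Proof. by move=> [a ->]; exists (Qopp a); rewrite Q2R_opp. Qed.

Lemma is_ratB x y : is_rat x -> is_rat y -> is_rat (x - y).
Proof. by move=> qx qy; apply: is_ratD => //; apply: is_ratN. Qed.

Lemma is_ratV x : is_rat x -> x <> 0 -> is_rat (/ x).
Proof.
move=> [a ->] nz; exists (Qinv a); rewrite Q2R_inv // => a0.
by apply: nz; rewrite (Qeq_eqR _ _ a0) /Q2R /=; field.
Qed.

Lemma is_intD x y : is_int x -> is_int y -> is_int (x + y).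
Proof. by move=> [a ->] [b ->]; exists (Z.add a b); rewrite plus_IZR. Qed.

Lemma is_intM x y : is_int x -> is_int y -> is_int (x * y).
Proof. by move=> [a ->] [b ->]; exists (Z.mul a b); rewrite mult_IZR. Qed.

Lemma is_intB x y : is_int x -> is_int y -> is_int (x - y).
Proof. by move=> [a ->] [b ->]; exists (Z.sub a b); rewrite minus_IZR. Qed.

Lemma cubic_no_rat_root (p q : Z) x : cubic_irreducible p q -> is_rat x ->
  x ^ 3 - IZR p * x - IZR q <> 0.
Proof. by move=> irr [t ->]; rewrite Q2R_ratr; apply: cubic_no_ratr_root. Qed.

Definition eval3 (theta : R) (u : R * R * R) : R :=
  let '(a, b, c) := u in a + b * theta + c * theta ^ 2.

(* Multiplication in R[x]/(x^3 - p x - q), in coordinates on the basis 1, x, x^2. *)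
Definition mul3 (p q : R) (u v : R * R * R) : R * R * R :=
  let '(a, b, c) := u in let '(a', b', c') := v in
  (a * a' + q * (b * c' + c * b'),
   a * b' + b * a' + p * (b * c' + c * b') + q * c * c',
   a * c' + b * b' + c * a' + p * c * c').

Fixpoint pow3 (p q : R) (u : R * R * R) (n : nat) : R * R * R :=
  if n is n'.+1 then mul3 p q u (pow3 p q u n') else (1, 0, 0).

Definition scale3 (k : R) (u : R * R * R) : R * R * R :=
  let '(a, b, c) := u in (k * a, k * b, k * c).

Definition rat3 (u : R * R * R) : Prop :=
  let '(a, b, c) := u in [/\ is_rat a, is_rat b & is_rat c].

(* The determinant of multiplication by a + b x + c x^2 on R[x]/(x^3 - p x - q). *)
Definition norm3 (p q : R) (u : R * R * R) : R :=
  let '(a, b, c) := u in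
  a * ((a + c * p) ^ 2 - (b * p + c * q) * b) - c * q * (b * (a + c * p) - (b * p + c * q) * c)
  + b * q * (b ^ 2 - (a + c * p) * c).

(* conj_re + i conj_im = a + b theta' + c theta'^2 with theta' := (- theta + i s) / 2,
   which is a root of x^3 - p x - q when p = (3 theta^2 - s^2) / 4 and
   q = theta^3 - p theta. *)
Definition conj_re (theta s : R) (u : R * R * R) : R :=
  let '(a, b, c) := u in a - b * theta / 2 + c * (theta ^ 2 - s ^ 2) / 4.

Definition conj_im (theta s : R) (u : R * R * R) : R :=
  let '(a, b, c) := u in s * (b - c * theta) / 2.

Definition conj_norm (theta s : R) (u : R * R * R) : R :=
  conj_re theta s u ^ 2 + conj_im theta s u ^ 2.

Section CoordinateArithmetic.

Variables (p q theta : R).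
Hypothesis theta_root : q = theta ^ 3 - p * theta.

Lemma eval3_mul u v : eval3 theta (mul3 p q u v) = eval3 theta u * eval3 theta v.
Proof. by case: u => [[a b] c]; case: v => [[a' b'] c'] /=; rewrite theta_root; ring. Qed.

Lemma eval3_pow u n : eval3 theta (pow3 p q u n) = eval3 theta u ^ n.
Proof. by elim: n => [|n IH] /=; [ring | rewrite eval3_mul IH]. Qed.

Lemma eval3_scale k u : eval3 theta (scale3 k u) = k * eval3 theta u.
Proof. by case: u => [[a b] c] /=; ring. Qed.

Variable s : R.
Hypothesis p_disc : p = (3 * theta ^ 2 - s ^ 2) / 4.

Lemma conj_re_mul u v : conj_re theta s (mul3 p q u v) =
  conj_re theta s u * conj_re theta s v - conj_im theta s u * conj_im theta s v.
Proof.
by case: u => [[a b] c]; case: v => [[a' b'] c'] /=; rewrite theta_root p_disc; field.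
Qed.

Lemma conj_im_mul u v : conj_im theta s (mul3 p q u v) =
  conj_re theta s u * conj_im theta s v + conj_im theta s u * conj_re theta s v.
Proof.
by case: u => [[a b] c]; case: v => [[a' b'] c'] /=; rewrite theta_root p_disc; field.
Qed.

Lemma conj_norm_mul u v :
  conj_norm theta s (mul3 p q u v) = conj_norm theta s u * conj_norm theta s v.
Proof. by rewrite /conj_norm conj_re_mul conj_im_mul; ring. Qed.

Lemma conj_norm_pow u n : conj_norm theta s (pow3 p q u n) = conj_norm theta s u ^ n.
Proof.
elim: n => [|n IH] /=; first by rewrite /conj_norm /=; field.
by rewrite conj_norm_mul IH.
Qed.

Lemma eval3_conj_norm u : eval3 theta u * conj_norm theta s u = norm3 p q u.
Proof. by case: u => [[a b] c]; rewrite /conj_norm /= theta_root p_disc; field. Qed.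

End CoordinateArithmetic.

Lemma conj_norm_scale theta s k u : conj_norm theta s (scale3 k u) = k ^ 2 * conj_norm theta s u.
Proof. by case: u => [[a b] c]; rewrite /conj_norm /=; field. Qed.

Lemma conj_norm_ge0 theta s u : 0 <= conj_norm theta s u.
Proof. by apply: Rplus_le_le_0_compat; apply: pow2_ge_0. Qed.

Lemma rat3_IZR a b c : rat3 (IZR a, IZR b, IZR c).
Proof. by split; apply: is_rat_IZR. Qed.

Lemma rat3_mul p q u v : is_rat p -> is_rat q -> rat3 u -> rat3 v -> rat3 (mul3 p q u v).
Proof.
case: u => [[a b] c]; case: v => [[a' b'] c'] qp qq [qa qb qc] [qa' qb' qc'].
by split; repeat (apply: is_ratD || apply: is_ratM).
Qed.

Lemma rat3_pow p q u n : is_rat p -> is_rat q -> rat3 u -> rat3 (pow3 p q u n).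
Proof.
move=> qp qq qu; elim: n => [|n IH] /=; last exact: rat3_mul.
exact: (rat3_IZR 1 0 0).
Qed.

Lemma rat3_scale_IZR k u : rat3 u -> rat3 (scale3 (IZR k) u).
Proof.
case: u => [[a b] c] [qa qb qc].
by split; apply: is_ratM => //; apply: is_rat_IZR.
Qed.

Lemma is_int_norm3 p q a b c : is_int p -> is_int q -> is_int a -> is_int b -> is_int c ->
  is_int (norm3 p q (a, b, c)).
Proof.
move=> *; rewrite /norm3 /pow.
by repeat (apply: is_intB || apply: is_intD || apply: is_intM) => //; apply: is_int_IZR.
Qed.

Lemma in_K_rat3 theta x : in_K theta x <-> exists2 u, rat3 u & eval3 theta u = x.
Proof.
split=> [[a [b [c ->]]] | [[[a b] c] [[a' ->] [b' ->] [c' ->]] <-]].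
  by exists (Q2R a, Q2R b, Q2R c) => //; split; apply: is_rat_Q2R.
by exists a', b', c'.
Qed.

Section RealRootOfCubic.

Variables (p q : Z) (theta : R).
Hypothesis irr : cubic_irreducible p q.
Hypothesis theta_root : theta ^ 3 - IZR p * theta - IZR q = 0.

Lemma theta_neq0 : theta <> 0.
Proof.
move=> theta0; apply: (cubic_no_rat_root irr (is_rat_IZR 0)).
by move: theta_root; rewrite theta0.
Qed.

Lemma theta_sq_neq_rat be ga : is_rat be -> is_rat ga -> theta ^ 2 <> be * theta + ga.
Proof.
move=> qbe qga theta2.
have no_root := cubic_no_rat_root irr.
have theta3 : theta ^ 3 = (be ^ 2 + ga) * theta + be * ga.
  transitivity (be * theta ^ 2 + ga * theta); last by rewrite theta2; ring.
  have -> : theta ^ 3 = theta * theta ^ 2 by ring.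
  by rewrite {1}theta2; ring.
have rest : (be ^ 2 + ga - IZR p) * theta + (be * ga - IZR q) = 0.
  by rewrite -theta_root theta3; ring.
have qbe2 : is_rat (be ^ 2) by rewrite /= Rmult_1_r; apply: is_ratM.
case: (Req_dec (be ^ 2 + ga - IZR p) 0) => [coef0 | coefn0].
  apply: (no_root (- be)); first exact: is_ratN.
  have hp : IZR p = be ^ 2 + ga by lra.
  have hq : IZR q = be * ga by rewrite coef0 in rest; lra.
  by rewrite hp hq; ring.
apply: (no_root ((IZR q - be * ga) / (be ^ 2 + ga - IZR p))).
  apply: is_ratM; first by apply: is_ratB; [apply: is_rat_IZR | apply: is_ratM].
  by apply: is_ratV => //; apply: is_ratB; [apply: is_ratD | apply: is_rat_IZR].
have -> : (IZR q - be * ga) / (be ^ 2 + ga - IZR p) = theta.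
  by apply: (Rmult_eq_reg_r (be ^ 2 + ga - IZR p)) => //; field_simplify => //; lra.
exact: theta_root.
Qed.

Lemma rat_coords_eq0 x y z : is_rat x -> is_rat y -> is_rat z ->
  x + y * theta + z * theta ^ 2 = 0 -> [/\ x = 0, y = 0 & z = 0].
Proof.
move=> qx qy qz E.
have z0 : z = 0.
  case: (Req_dec z 0) => // nz; exfalso.
  apply: (theta_sq_neq_rat (be := - y / z) (ga := - x / z)).
  - by apply: is_ratM; [apply: is_ratN | apply: is_ratV].
  - by apply: is_ratM; [apply: is_ratN | apply: is_ratV].
  apply: (Rmult_eq_reg_l z) => //.
  have -> : z * (- y / z * theta + - x / z) = - y * theta - x by field.
  lra.
have y0 : y = 0.
  case: (Req_dec y 0) => // ny; exfalso.
  apply: (cubic_no_rat_root irr (x := - x / y)).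
    by apply: is_ratM; [apply: is_ratN | apply: is_ratV].
  have -> : - x / y = theta.
    by apply: (Rmult_eq_reg_r y) => //; field_simplify => //; rewrite z0 in E; lra.
  exact: theta_root.
by split => //; rewrite y0 z0 in E; lra.
Qed.

Lemma eval3_inj u v : rat3 u -> rat3 v -> eval3 theta u = eval3 theta v -> u = v.
Proof.
case: u => [[a b] c]; case: v => [[a' b'] c'] [qa qb qc] [qa' qb' qc'] /= E.
have [da db dc] : [/\ a - a' = 0, b - b' = 0 & c - c' = 0].
  apply: (rat_coords_eq0 (is_ratB qa qa') (is_ratB qb qb') (is_ratB qc qc')).
  lra.
by congr (_, _, _); lra.
Qed.

Lemma depressed_cubic_disc_gt0 :
  (forall x, x ^ 3 - IZR p * x - IZR q = 0 -> x = theta) -> 0 < 3 * theta ^ 2 - 4 * IZR p.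
Proof.
move=> theta_unique; apply: Rnot_le_lt => disc_le0.
pose r := sqrt (4 * IZR p - 3 * theta ^ 2).
have rr : r * r = 4 * IZR p - 3 * theta ^ 2 by apply: sqrt_sqrt; lra.
have quad_root x : x ^ 2 + theta * x + theta ^ 2 - IZR p = 0 -> x = theta.
  move=> qx; apply: theta_unique.
  have -> : x ^ 3 - IZR p * x - IZR q =
    (x - theta) * (x ^ 2 + theta * x + theta ^ 2 - IZR p) + (theta ^ 3 - IZR p * theta - IZR q).
    by ring.
  by rewrite qx theta_root; ring.
have r1 := quad_root ((- theta + r) / 2) ltac:(nra).
have r2 := quad_root ((- theta - r) / 2) ltac:(nra).
by apply: theta_neq0; lra.
Qed.

End RealRootOfCubic.

Lemma centered_IZR_add z e : e ^ 2 < / 4 -> centered (IZR z + e) = e.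
Proof.
move=> e_small; have [e_gt e_lt] : - / 2 < e < / 2 by split; nra.
rewrite /centered /Rfloor /Int_part.
have <- : Z.add z 1 = up (IZR z + e + / 2) by apply: tech_up; rewrite plus_IZR; lra.
by rewrite minus_IZR plus_IZR; ring.
Qed.

Lemma le1_of_is_int_inv_pow r D : 0 < r -> 0 < D -> (forall m, is_int (D / r ^ m)) -> r <= 1.
Proof.
move=> r_gt0 D_gt0 int_inv_pow; apply: Rnot_lt_le => r_gt1.
have [|N rN_large] := Pow_x_infinity r _ (D + 1); first by rewrite Rabs_pos_eq; lra.
have rN_pos : 0 < r ^ N by apply: pow_lt.
have := rN_large N (le_n N); rewrite Rabs_pos_eq; last lra.
have [k Ek] := int_inv_pow N.
have k_pos : Z.lt 0 k by apply: lt_IZR; rewrite -Ek; apply: Rdiv_lt_0_compat.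
have k_ge1 : 1 <= IZR k by apply: IZR_le; lia.
have : D / r ^ N * r ^ N = D by field; lra.
nra.
Qed.

Section UnitConjugateNorm.
Variables (p q : Z) (theta s : R) (d : Z).
Hypothesis irr : cubic_irreducible p q.
Hypothesis theta_root : theta ^ 3 - IZR p * theta - IZR q = 0.
Hypothesis p_disc : IZR p = (3 * theta ^ 2 - s ^ 2) / 4.
Hypothesis d_gt0 : 0 < IZR d.
Hypothesis OK_sub : forall x, in_OK theta x -> in_Ztheta_over_d d theta x.

Let q_root : IZR q = theta ^ 3 - IZR p * theta. Proof. lra. Qed.

Lemma in_OK_scale3_int u : rat3 u -> in_OK theta (eval3 theta u) ->
  exists a b c : Z, scale3 (IZR d) u = (IZR a, IZR b, IZR c).
Proof.
move=> qu /OK_sub [a [b [c E]]]; exists a, b, c.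
apply: (eval3_inj irr theta_root); rewrite ?eval3_scale ?E //.
  exact: rat3_scale_IZR.
exact: rat3_IZR.
Qed.

Lemma is_int_norm_pow u m : rat3 u -> is_alg_integer (eval3 theta u) ->
  is_int (IZR d ^ 3 * (eval3 theta u * conj_norm theta s u) ^ m).
Proof.
move=> qu int_u; pose v := pow3 (IZR p) (IZR q) u m.
have qv : rat3 v by apply: rat3_pow => //; apply: is_rat_IZR.
have ev : eval3 theta v = eval3 theta u ^ m by apply: eval3_pow.
have [|a [b [c dv]]] := in_OK_scale3_int qv.
  split; first by apply/in_K_rat3; exists v.
  by rewrite ev; apply: is_alg_integer_pow.
have -> : IZR d ^ 3 * (eval3 theta u * conj_norm theta s u) ^ m
    = eval3 theta (scale3 (IZR d) v) * conj_norm theta s (scale3 (IZR d) v).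
  rewrite eval3_scale conj_norm_scale ev (conj_norm_pow q_root p_disc) Rpow_mult_distr.
  ring.
rewrite (eval3_conj_norm q_root p_disc) dv.
by apply: is_int_norm3; apply: is_int_IZR.
Qed.

Lemma norm_mul_norm_inv u u' : rat3 u -> rat3 u' -> eval3 theta u <> 0 ->
  eval3 theta u' = / eval3 theta u ->
  (eval3 theta u * conj_norm theta s u) * (eval3 theta u' * conj_norm theta s u') = 1.
Proof.
move=> qu qu' x_neq0 eu'.
have one : mul3 (IZR p) (IZR q) u u' = (1, 0, 0).
  apply: (eval3_inj irr theta_root); first by apply: rat3_mul => //; apply: is_rat_IZR.
    exact: (rat3_IZR 1 0 0).
  by rewrite (eval3_mul q_root) eu' /=; field.
have := conj_norm_mul q_root p_disc u u'.
rewrite one [conj_norm _ _ (1, 0, 0)]/conj_norm /= => cn.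
have {}cn : conj_norm theta s u * conj_norm theta s u' = 1 by rewrite -cn; field.
by rewrite eu' -[RHS]cn; field.
Qed.

Lemma unit_conj_norm u : rat3 u -> 0 < eval3 theta u ->
  in_OK theta (eval3 theta u) -> in_OK theta (/ eval3 theta u) ->
  conj_norm theta s u = / eval3 theta u.
Proof.
move=> qu x_gt0 [_ int_x] [/in_K_rat3 [u' qu' eu'] int_x'].
rewrite -eu' in int_x'.
have := norm_mul_norm_inv qu qu' ltac:(lra) eu'.
set N := eval3 theta u * _; set N' := eval3 theta u' * _ => NN'.
have N_ge0 : 0 <= N by apply: Rmult_le_pos; [lra | apply: conj_norm_ge0].
have N'_ge0 : 0 <= N'.
  by apply: Rmult_le_pos; [rewrite eu'; apply/Rlt_le/Rinv_0_lt_compat | apply: conj_norm_ge0].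
have N_gt0 : 0 < N by nra.
have N'_gt0 : 0 < N' by nra.
have N'E : N' = / N by apply: (Rmult_eq_reg_l N); [rewrite NN' Rinv_r |]; lra.
have d3_gt0 : 0 < IZR d ^ 3 by apply: pow_lt.
have N_le1 : N <= 1.
  apply: (le1_of_is_int_inv_pow N_gt0 d3_gt0) => m.
  have -> : IZR d ^ 3 / N ^ m = IZR d ^ 3 * N' ^ m by rewrite N'E pow_inv.
  exact: is_int_norm_pow.
have N'_le1 : N' <= 1.
  apply: (le1_of_is_int_inv_pow N'_gt0 d3_gt0) => m.
  have -> : IZR d ^ 3 / N' ^ m = IZR d ^ 3 * N ^ m by rewrite N'E pow_inv /Rdiv Rinv_inv.
  exact: is_int_norm_pow.
have N1 : N = 1 by nra.
by apply: (Rmult_eq_reg_l (eval3 theta u)); [rewrite -/N N1; field | ]; lra.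
Qed.

Lemma unit_pow_conj_norm lam u n : rat3 u -> eval3 theta u = lam ^ n -> 0 < lam ->
  in_OK theta lam -> in_OK theta (/ lam) -> conj_norm theta s u = / lam ^ n.
Proof.
move=> qu eu lam_gt0 OK_lam OK_lam'.
have [ul qul eul] := (in_K_rat3 theta lam).1 OK_lam.1.
have -> : u = pow3 (IZR p) (IZR q) ul n.
  apply: (eval3_inj irr theta_root qu).
    by apply: rat3_pow => //; apply: is_rat_IZR.
  by rewrite (eval3_pow q_root) eul.
by rewrite (conj_norm_pow q_root p_disc) (unit_conj_norm qul) eul // pow_inv.
Qed.

End UnitConjugateNorm.

Section CenteredEstimates.
Variables (p : Z) (theta d L a b c : R).
Local Notation s := (sqrt (3 * theta ^ 2 - 4 * IZR p)).
Local Notation C1 := (C1const p theta).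
Hypothesis disc_gt0 : 0 < 3 * theta ^ 2 - 4 * IZR p.
Hypothesis theta_neq0 : theta <> 0.
Hypothesis d_gt0 : 0 < d.
Hypothesis L_gt0 : 0 < L.
Hypothesis norm_L : conj_norm theta s (a, b, c) * L ^ 2 = 1.

Let s_gt0 : 0 < s. Proof. exact: sqrt_lt_R0. Qed.
Let s_sq : s ^ 2 = 3 * theta ^ 2 - 4 * IZR p. Proof. by rewrite pow2_sqrt; lra. Qed.
Let sqrt2_sq : sqrt 2 ^ 2 = 2. Proof. by rewrite pow2_sqrt; lra. Qed.
Let sqrt2_gt0 : 0 < sqrt 2. Proof. by apply: sqrt_lt_R0; lra. Qed.

Lemma centered_k_theta (v : Z) : d * b = IZR v ->
  2 * sqrt 2 * d * C1 / Rabs theta < L -> centered (d * c * theta) = - (d * (b * theta - c * theta ^ 2)) / theta.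
Proof.
move=> dv HL.
have Ls : 4 * d < L * s.
  have C1_ge : sqrt 2 * Rabs theta / s <= C1 by apply: Rmax_r.
  have abs_gt0 : 0 < Rabs theta by apply: Rabs_pos_lt.
  have : 2 * sqrt 2 ^ 2 * d / s <= 2 * sqrt 2 * d * C1 / Rabs theta.
    have -> : 2 * sqrt 2 ^ 2 * d / s = 2 * sqrt 2 * d * (sqrt 2 * Rabs theta / s) / Rabs theta.
      by field; lra.
    apply: Rmult_le_compat_r; first by apply: Rlt_le; apply: Rinv_0_lt_compat.
    by apply: Rmult_le_compat_l => //; nra.
  have : 2 * sqrt 2 ^ 2 * d / s * s = 4 * d by rewrite sqrt2_sq; field; lra.
  nra.
have -> : d * c * theta = IZR v + - (d * (b * theta - c * theta ^ 2)) / theta.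
  by rewrite -dv; field.
apply: centered_IZR_add.
have -> : - (d * (b * theta - c * theta ^ 2)) / theta = - (2 * d * conj_im theta s (a, b, c) / s).
  by rewrite /conj_im; field; split; [apply: Rgt_not_eq | ].
have im_L : conj_im theta s (a, b, c) ^ 2 * L ^ 2 <= 1.
  move: norm_L; rewrite /conj_norm; have := pow2_ge_0 (conj_re theta s (a, b, c)); nra.
set B := conj_im theta s (a, b, c) in im_L *.
have key : (4 * d * B) ^ 2 < s ^ 2.
  apply: (Rmult_lt_reg_r (L ^ 2)); first by nra.
  have : (4 * d) ^ 2 < (L * s) ^ 2 by nra.
  nra.
set X := 2 * d * B / s.
have Xs : X * s = 2 * d * B by rewrite /X; field; lra.
have : (X * s) ^ 2 * 4 < s ^ 2 by rewrite Xs; nra.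
have : 0 < s ^ 2 by nra.
nra.
Qed.

Lemma C1const_sq_ge : 1 + (theta / s) ^ 2 <= C1 ^ 2.
Proof.
have C1_ge_sqrt2 : sqrt 2 <= C1 by apply: Rmax_l.
have C1_ge : sqrt 2 * Rabs theta / s <= C1 by apply: Rmax_r.
have : 2 <= C1 ^ 2 by rewrite -sqrt2_sq; nra.
have : 2 * (theta / s) ^ 2 <= C1 ^ 2.
  have -> : 2 * (theta / s) ^ 2 = (sqrt 2 * Rabs theta / s) ^ 2.
    transitivity (sqrt 2 ^ 2 * Rabs theta ^ 2 / s ^ 2); last by field; lra.
    by rewrite sqrt2_sq pow2_abs; field; lra.
  have : 0 <= sqrt 2 * Rabs theta / s.
    by apply: Rmult_le_pos; [apply: Rmult_le_pos; [lra | apply: Rabs_pos] | apply: Rlt_le; apply: Rinv_0_lt_compat].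
  nra.
nra.
Qed.

Lemma centered_k_theta2 (u w : Z) : d * a = IZR u -> d * c = IZR w ->
  2 * d * C1 < L -> centered (d * c * theta ^ 2) = - (d * (a + IZR p * c - c * theta ^ 2)).
Proof.
move=> du dw HL.
have -> : d * c * theta ^ 2 = IZR (Z.add u (Z.mul p w)) + - (d * (a + IZR p * c - c * theta ^ 2)).
  by rewrite plus_IZR mult_IZR -du -dw; ring.
apply: centered_IZR_add.
set A := conj_re theta s (a, b, c); set B := conj_im theta s (a, b, c).
have Y_AB : a + IZR p * c - c * theta ^ 2 = A + theta / s * B.
  by rewrite /A /B /conj_re /conj_im s_sq; field; lra.
set Y := a + IZR p * c - c * theta ^ 2 in Y_AB *.
have Y_L : Y ^ 2 * L ^ 2 <= C1 ^ 2.
  have C1sq := C1const_sq_ge.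
  have : Y ^ 2 <= (1 + (theta / s) ^ 2) * (A ^ 2 + B ^ 2).
    by rewrite Y_AB; have := pow2_ge_0 (theta / s * A - B); nra.
  have : 0 <= L ^ 2 by nra.
  move: norm_L; rewrite /conj_norm -/A -/B => AB_L L2_ge0 Y2_le.
  apply: (Rle_trans _ ((1 + (theta / s) ^ 2) * ((A ^ 2 + B ^ 2) * L ^ 2))).
    by rewrite -Rmult_assoc; apply: Rmult_le_compat_r.
  by rewrite AB_L Rmult_1_r.
have C1_ge0 : 0 <= C1 by apply: Rle_trans (Rmax_l _ _); apply: sqrt_pos.
have dC1_ge0 : 0 <= 2 * d * C1 by apply: Rmult_le_pos; lra.
have := Rmult_le_0_lt_compat _ _ _ _ dC1_ge0 dC1_ge0 HL HL.
have : 0 < L ^ 2 by nra.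
nra.
Qed.
End CenteredEstimates.

(* The [<=] on nat in the statement is Peano's, shadowed by ssrnat's until here. *)
Import Corelib.Init.Peano.
Local Open Scope R_scope.

Theorem mainTheorem8
  (p q : Z) (theta : R)
  (Hirr : cubic_irreducible p q)
  (Hroot : theta ^ 3 - IZR p * theta - IZR q = 0)
  (Hunique : forall x : R, x ^ 3 - IZR p * x - IZR q = 0 -> x = theta)
  (d : Z) (Hd : (0 < d)%Z)
  (HOK : forall alpha : R, in_OK theta alpha -> in_Ztheta_over_d d theta alpha)
  (lambda : R) (Hlam : in_OK theta lambda) (Hlaminv : in_OK theta (/ lambda))
  (Hlam1 : 1 < lambda)
  (n : nat) (Hn : (1 <= n)%nat)
  (a b c : Q)
  (Habc : Q2R a + Q2R b * theta + Q2R c * theta ^ 2 = lambda ^ n) :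
  let Y := Q2R a + IZR p * Q2R c - Q2R c * theta ^ 2 in
  let Zn := Q2R b * theta - Q2R c * theta ^ 2 in
  let k := IZR d * Q2R c in
  (Rpower lambda (INR n / 2) > 2 * sqrt 2 * IZR d * C1const p theta / Rabs theta ->
     centered (k * theta) = - (IZR d * Zn) / theta) /\
  (Rpower lambda (INR n / 2) > 2 * IZR d * C1const p theta ->
     centered (k * theta ^ 2) = - (IZR d * Y)).
Proof.
move=> Y Zn k.
have theta_neq0 := theta_neq0 Hirr Hroot.
have disc_gt0 := depressed_cubic_disc_gt0 Hirr Hroot Hunique.
have p_disc : IZR p = (3 * theta ^ 2 - sqrt (3 * theta ^ 2 - 4 * IZR p) ^ 2) / 4.
  by rewrite pow2_sqrt; lra.
have d_gt0 : 0 < IZR d by apply: IZR_lt.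
pose w := (Q2R a, Q2R b, Q2R c).
have qw : rat3 w by split; apply: is_rat_Q2R.
have [|u [v [w' [du dv dw']]]] := in_OK_scale3_int Hirr Hroot HOK qw.
  rewrite [eval3 _ _]Habc; split; last by apply: is_alg_integer_pow; case: Hlam.
  by apply/in_K_rat3; exists w.
have cn_w := unit_pow_conj_norm Hirr Hroot p_disc d_gt0 HOK qw Habc ltac:(lra) Hlam Hlaminv.
set L := Rpower lambda (INR n / 2).
have L_gt0 : 0 < L by apply: exp_pos.
have L_sq : L ^ 2 = lambda ^ n.
  by rewrite -Rpower_pow // Rpower_mult -Rpower_pow; [congr Rpower; rewrite /=; field | lra].
have norm_L : conj_norm theta (sqrt (3 * theta ^ 2 - 4 * IZR p)) w * L ^ 2 = 1.
  by rewrite cn_w L_sq; field; apply: pow_nonzero; lra.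
split=> HL.
  exact: centered_k_theta disc_gt0 theta_neq0 d_gt0 L_gt0 norm_L v dv HL.
exact: centered_k_theta2 disc_gt0 d_gt0 norm_L u w' du dw' HL.
Qed.
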